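(* Let $A\in\mathbb{R}^{m\times n}$ and let $A=P_1-R_1+S_1=P_2-R_2+S_2$ be two double proper weak splittings of $A$. Let $\widehat{A}=(I-S_2P_1^{\dagger})A$ and $\widehat{P}=P_2$. If $\widehat{A}^{\dagger}\widehat{P}\geq 0$, $N(S_2)\supseteq N(P_2)$, $R(S_2)\subseteq R(P_2)$ and $1\notin\sigma(S_2P_1^{\dagger})$, then $\rho(W_{12})<1$, where $$W_{12}=\begin{pmatrix} P_2^{\dagger}R_2-P_2^{\dagger}S_2P_1^{\dagger}R_1 & P_2^{\dagger}S_2P_1^{\dagger}S_1\\ I & 0\end{pmatrix}.$$
   Context: For $M\in\mathbb{R}^{m\times n}$, $M^{\dagger}$ is its Moore–Penrose inverse, $R(M)$, $N(M)$ its range and null space; inequalities are entrywise; $\rho$ is the spectral radius, $\sigma$ the spectrum. A double splitting $A=P-R+S$ ($P,R,S\in\mathbb{R}^{m\times n}$) is a double proper splitting if $R(P)=R(A)$ and $N(P)=N(A)$; it is a double proper weak splitting if moreover $P^{\dagger}R\geq 0$ and $P^{\dagger}S\leq 0$. *)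

From HB Require Import structures.
From mathcomp Require Import all_boot all_order all_algebra.
From mathcomp Require Import complex Rstruct.
From Stdlib Require Import Reals.
Set Implicit Arguments. Unset Strict Implicit. Unset Printing Implicit Defensive.
Import Order.TTheory GRing.Theory Num.Theory.
Local Open Scope ring_scope.

Definition is_MP_inverse m n (A : 'M[R]_(m, n)) (X : 'M[R]_(n, m)) : Prop :=
  [/\ A *m X *m A = A, X *m A *m X = X,
      (A *m X)^T = A *m X & (X *m A)^T = X *m A].

Definition range_sub m n k (A : 'M[R]_(m, n)) (B : 'M[R]_(m, k)) : Prop :=
  forall x : 'cV[R]_n, exists y : 'cV[R]_k, A *m x = B *m y.
Definition null_sub m k n (A : 'M[R]_(m, n)) (B : 'M[R]_(k, n)) : Prop :=
  forall x : 'cV[R]_n, A *m x = 0 -> B *m x = 0.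

Definition mx_nonneg m n (M : 'M[R]_(m, n)) : Prop := forall i j, 0 <= M i j.
Definition mx_nonpos m n (M : 'M[R]_(m, n)) : Prop := forall i j, M i j <= 0.

(* double proper splitting A = P - Q + S: R(P) = R(A), N(P) = N(A)
   (Q plays the role of the paper's R, renamed to avoid clashing with the reals). *)
Definition double_proper_splitting m n (A P Q S : 'M[R]_(m, n)) : Prop :=
  [/\ A = P - Q + S,
      range_sub P A /\ range_sub A P &
      null_sub P A /\ null_sub A P].

Definition double_proper_weak_splitting m n (A P Q S : 'M[R]_(m, n))
    (Pd : 'M[R]_(n, m)) : Prop :=
  [/\ double_proper_splitting A P Q S, is_MP_inverse P Pd,
      mx_nonneg (Pd *m Q) & mx_nonpos (Pd *m S)].

Definition spectrum n (M : 'M[R]_n) : pred R[i] :=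
  fun z => root (map_poly (fun x : R => (x%:C)%C) (char_poly M)) z.

Definition spectral_radius_lt1 n (M : 'M[R]_n) : Prop :=
  forall z : R[i], spectrum M z -> `|z| < 1.

(* Let T and U be the two top blocks of W12; they are nonnegative by the sign
   conditions of the weak splittings, and V := T + U = P2^+ (P2 - Â).  If W12
   had an eigenvalue of modulus >= 1, the entrywise moduli of an eigenvector
   would give a nonzero y = (y1, y2) >= 0 with y <= W12 y, hence y2 <= y1 and
   y1 <= V y1.  So it suffices that V has no nonzero nonnegative subinvariant
   vector.  The range and null space hypotheses (and 1 not in the spectrum of
   S2 P1^+) give R(Â) ⊆ R(P2) and N(Â) ⊆ N(P2); with K := Â^+ P2 >= 0 and
   Pi := Â^+ Â this yields K V = K - Pi and Pi V = V.  For y >= 0 with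
   y <= V y, the vector w := V y >= 0 then satisfies V w - w >= 0 and
   K (V w - w) = -w, so w = 0 and finally y = 0. *)

From HB Require Import structures.
From mathcomp Require Import all_boot all_order all_algebra.
From mathcomp Require Import complex Rstruct lra.
From Stdlib Require Import Reals.
Set Implicit Arguments. Unset Strict Implicit. Unset Printing Implicit Defensive.
Import Order.TTheory GRing.Theory Num.Theory.
Local Open Scope ring_scope.

Lemma char_poly_trmx (K : comNzRingType) n (M : 'M[K]_n) :
  char_poly M^T = char_poly M.
Proof.
rewrite /char_poly -det_tr; congr (\det _); apply/matrixP => i j.
by rewrite !mxE eq_sym.
Qed.

Lemma spectrum_eigenvector n (M : 'M[R]_n) z : spectrum M z ->
  exists2 c : 'cV[R[i]]_n, map_mx (real_complex R) M *m c = z *: c & c != 0.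
Proof.
rewrite /spectrum map_char_poly -char_poly_trmx -eigenvalue_root_char.
move=> /eigenvalueP [v Mv v0]; exists v^T; last by rewrite trmx_eq0.
by rewrite -[LHS]trmxK trmx_mul trmxK Mv linearZ.
Qed.

Lemma spectrum_fixed_cV n (M : 'M[R]_n) (x : 'cV[R]_n) :
  M *m x = x -> x != 0 -> spectrum M 1.
Proof.
move=> Mx x0; have : eigenvalue M^T 1.
  by apply/eigenvalueP; exists x^T; rewrite ?trmx_eq0 // -trmx_mul Mx scale1r.
rewrite eigenvalue_root_char char_poly_trmx => /(rmorph_root (real_complex R)).
by rewrite rmorph1.
Qed.

Definition mx_le m n (A B : 'M[R]_(m, n)) : Prop := forall i j, A i j <= B i j.

Lemma mx_nonneg_subr m n (A B : 'M[R]_(m, n)) : mx_nonneg (B - A) <-> mx_le A B.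
Proof. by split=> AB i j; have := AB i j; rewrite !mxE subr_ge0. Qed.

Lemma mulmx_ge0 m n p (M : 'M[R]_(m, n)) (N : 'M[R]_(n, p)) :
  mx_nonneg M -> mx_nonneg N -> mx_nonneg (M *m N).
Proof. by move=> M0 N0 i j; rewrite mxE; apply: sumr_ge0 => k _; apply: mulr_ge0. Qed.

Lemma mulmx_le0 m n p (M : 'M[R]_(m, n)) (N : 'M[R]_(n, p)) :
  mx_nonpos M -> mx_nonpos N -> mx_nonneg (M *m N).
Proof. by move=> M0 N0 i j; rewrite mxE; apply: sumr_ge0 => k _; apply: mulr_le0. Qed.

Lemma mulmx_le0_ge0 m n p (M : 'M[R]_(m, n)) (N : 'M[R]_(n, p)) :
  mx_nonpos M -> mx_nonneg N -> mx_nonpos (M *m N).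
Proof. by move=> M0 N0 i j; rewrite mxE; apply: sumr_le0 => k _; apply: mulr_le0_ge0. Qed.

Lemma mx_le_wpmul2l m n p (M : 'M[R]_(m, n)) (A B : 'M[R]_(n, p)) :
  mx_nonneg M -> mx_le A B -> mx_le (M *m A) (M *m B).
Proof. by move=> M0 AB i j; rewrite !mxE; apply: ler_sum => k _; apply: ler_wpM2l. Qed.

Lemma mx_nonneg_block m1 m2 n1 n2 (Aul : 'M[R]_(m1, n1)) (Aur : 'M[R]_(m1, n2))
    (Adl : 'M[R]_(m2, n1)) (Adr : 'M[R]_(m2, n2)) :
  mx_nonneg Aul -> mx_nonneg Aur -> mx_nonneg Adl -> mx_nonneg Adr ->
  mx_nonneg (block_mx Aul Aur Adl Adr).
Proof.
move=> ul ur dl dr i j; rewrite -(splitK i) -(splitK j).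
by case: (fintype.split i) => i'; case: (fintype.split j) => j';
  rewrite ?block_mxEul ?block_mxEur ?block_mxEdl ?block_mxEdr.
Qed.

Definition subinvariant n (M : 'M[R]_n) (y : 'cV[R]_n) : Prop :=
  mx_nonneg y /\ mx_le y (M *m y).

Lemma subinvariant_eq0 n (V K Pi : 'M[R]_n) (y : 'cV[R]_n) :
  mx_nonneg V -> mx_nonneg K -> K *m V = K - Pi -> Pi *m V = V ->
  subinvariant V y -> y = 0.
Proof.
move=> V0 K0 KV PiV [y0 yVy]; set w := V *m y.
have w0 : mx_nonneg w by move=> i j; apply: le_trans (y0 i j) (yVy i j).
have Vw0 : mx_nonneg (V *m w - w).
  by apply/mx_nonneg_subr/mx_le_wpmul2l.
have KVw : K *m (V *m w - w) = - w.
  have Piw : Pi *m w = w by rewrite /w mulmxA PiV.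
  by rewrite mulmxBr mulmxA KV mulmxBl Piw addrAC subrr add0r.
have w_eq0 i j : w i j = 0.
  apply/le_anti; rewrite w0 andbT -oppr_ge0.
  by have := mulmx_ge0 K0 Vw0 i j; rewrite KVw mxE.
apply/matrixP => i j; rewrite mxE; apply/le_anti; rewrite y0 andbT -(w_eq0 i j).
exact: yVy.
Qed.

Lemma nonneg_spectrum_subinvariant n (M : 'M[R]_n) z :
  mx_nonneg M -> spectrum M z -> 1 <= `|z| -> exists2 y, subinvariant M y & y != 0.
Proof.
move=> M0 /spectrum_eigenvector [c Mc c0] z1.
pose y := \col_i complex.Re `|c i 0|.
have yE i : (y i 0)%:C%C = `|c i 0| by rewrite mxE RRe_real ?normr_real.
have y0 : mx_nonneg y by move=> i j; rewrite (ord1 j) -ler0c yE normr_ge0.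
exists y; last first.
  apply: contraNneq c0 => y_eq0; apply/eqP/matrixP => i j; rewrite (ord1 j) mxE.
  by apply/eqP; rewrite -normr_eq0 -yE y_eq0 mxE.
split=> // i j; rewrite (ord1 j) -lecR yE.
apply: le_trans (ler_peMl (normr_ge0 _) z1) _; rewrite -normrM.
move/matrixP: Mc => /(_ i 0); rewrite [in RHS]mxE => <-.
rewrite !mxE rmorph_sum; apply: le_trans (ler_norm_sum _ _ _) _.
apply: ler_sum => k _; rewrite mxE normrM -yE rmorphM /= ger0_norm ?ler0c //.
Qed.

Lemma block_subinvariant_eq0 n (T U : 'M[R]_n) (y1 y2 : 'cV[R]_n) :
  mx_nonneg U -> (forall y, subinvariant (T + U) y -> y = 0) ->
  subinvariant (block_mx T U 1%:M 0) (col_mx y1 y2) -> col_mx y1 y2 = 0.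
Proof.
move=> U0 TU [y0 yWy]; rewrite mul_block_col mul1mx mul0mx addr0 in yWy.
have y10 : mx_nonneg y1 by move=> i j; have := y0 (lshift n i) j; rewrite col_mxEu.
have y20 : mx_nonneg y2 by move=> i j; have := y0 (rshift n i) j; rewrite col_mxEd.
have y21 : mx_le y2 y1 by move=> i j; have := yWy (rshift n i) j; rewrite !col_mxEd.
have y1_eq0 : y1 = 0.
  apply: TU; split=> // i j; have := yWy (lshift n i) j; rewrite !col_mxEu.
  move/le_trans; apply; rewrite mulmxDl [leLHS]mxE [leRHS]mxE lerD2l.
  exact: mx_le_wpmul2l.
have y2_eq0 : y2 = 0.
  apply/matrixP => i j; apply/le_anti; rewrite mxE y20 andbT.
  by have := y21 i j; rewrite y1_eq0 mxE.
by rewrite y1_eq0 y2_eq0 col_mx0.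
Qed.

Lemma spectral_radius_lt1_block n (T U : 'M[R]_n) :
  mx_nonneg T -> mx_nonneg U -> (forall y, subinvariant (T + U) y -> y = 0) ->
  spectral_radius_lt1 (block_mx T U 1%:M 0).
Proof.
move=> T0 U0 TU z Wz; rewrite real_ltNge ?normr_real ?real1 //; apply/negP => z1.
have W0 : mx_nonneg (block_mx T U 1%:M 0).
  by apply: mx_nonneg_block => // i j; rewrite mxE ?ler0n.
have [y] := nonneg_spectrum_subinvariant W0 Wz z1.
by rewrite -(vsubmxK y) => /(block_subinvariant_eq0 U0 TU) ->; rewrite eqxx.
Qed.

Lemma mulmx_cV_ext m n (M N : 'M[R]_(m, n)) :
  (forall x : 'cV[R]_n, M *m x = N *m x) -> M = N.
Proof.
move=> MN; apply/matrixP => i j; have := MN (delta_mx j 0).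
by rewrite -!colE => /matrixP /(_ i 0); rewrite !mxE.
Qed.

Lemma mulmx_pinv_range m n k (P : 'M[R]_(m, n)) (Pd : 'M[R]_(n, m)) (B : 'M[R]_(m, k)) :
  range_sub B P -> P *m Pd *m P = P -> P *m Pd *m B = B.
Proof.
move=> BP PPdP; apply: mulmx_cV_ext => x; have [y Bx] := BP x.
by rewrite -mulmxA Bx mulmxA PPdP.
Qed.

Lemma mulmx_pinv_null m n k (P : 'M[R]_(m, n)) (Pd : 'M[R]_(n, m)) (B : 'M[R]_(k, n)) :
  null_sub P B -> P *m Pd *m P = P -> B *m Pd *m P = B.
Proof.
move=> PB PPdP; apply/eqP; rewrite -subr_eq0 -mulmxA -{2}[B]mulmx1 -mulmxBr.
apply/eqP/mulmx_cV_ext => x; rewrite mul0mx -mulmxA; apply: PB.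
by rewrite mulmxA mulmxBr mulmx1 mulmxA PPdP subrr mul0mx.
Qed.

Lemma MP_inverse_sym_fix m n (P : 'M[R]_(m, n)) (Pd : 'M[R]_(n, m)) (Pi : 'M[R]_n) :
  is_MP_inverse P Pd -> Pi^T = Pi -> P *m Pi = P -> Pi *m Pd = Pd.
Proof.
move=> [_ PdPPd _ PdP_sym] Pi_sym PPi.
have PiPt : Pi *m P^T = P^T by rewrite -Pi_sym -trmx_mul PPi.
(* [Pd = (Pd P)^T Pd = P^T Pd^T Pd], and [Pi] fixes [P^T] on the left. *)
by rewrite -PdPPd -PdP_sym trmx_mul !mulmxA PiPt.
Qed.

Lemma range_sub_deflated m n (A P S : 'M[R]_(m, n)) (X : 'M[R]_(n, m)) :
  range_sub A P -> range_sub S P -> range_sub ((1%:M - S *m X) *m A) P.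
Proof.
move=> AP SP x; have [y1 Ay1] := AP x; have [y2 Sy2] := SP (X *m (A *m x)).
exists (y1 - y2); rewrite mulmxBr -Ay1 -Sy2 -mulmxA mulmxBl mul1mx.
by rewrite -mulmxA.
Qed.

Lemma null_sub_deflated m n (A P : 'M[R]_(m, n)) (M : 'M[R]_m) :
  ~ spectrum M 1 -> null_sub A P -> null_sub ((1%:M - M) *m A) P.
Proof.
move=> M1 AP x; rewrite -mulmxA mulmxBl mul1mx => /subr0_eq/esym MAx.
apply: AP; have [//|Ax0] := eqVneq (A *m x) 0.
by case: M1; apply: spectrum_fixed_cV MAx Ax0.
Qed.

Lemma double_splitting_deflated m n (A P1 Q1 S1 P2 Q2 S2 : 'M[R]_(m, n))
    (X : 'M[R]_(n, m)) :
  A = P1 - Q1 + S1 -> A = P2 - Q2 + S2 -> S2 *m X *m P1 = S2 ->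
  Q2 - S2 *m X *m Q1 + S2 *m X *m S1 = P2 - (1%:M - S2 *m X) *m A.
Proof.
move=> A1 A2 SXP1; rewrite mulmxBl mul1mx.
have -> : S2 *m X *m A = S2 - S2 *m X *m Q1 + S2 *m X *m S1.
  by rewrite {1}A1 mulmxDr mulmxBr SXP1.
rewrite A2; move: (S2 *m X *m Q1) (S2 *m X *m S1) => a b.
by apply/matrixP => i j; rewrite !mxE; lra.
Qed.

Lemma pinv_comparison_subinvariant_eq0 m n (P B : 'M[R]_(m, n))
    (Pd Bd : 'M[R]_(n, m)) (y : 'cV[R]_n) :
  is_MP_inverse P Pd -> is_MP_inverse B Bd -> range_sub B P -> null_sub B P ->
  mx_nonneg (Bd *m P) -> mx_nonneg (Pd *m (P - B)) ->
  subinvariant (Pd *m (P - B)) y -> y = 0.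
Proof.
move=> MPP MPB BP PB BdP0 V0; have [PPdP _ _ _] := MPP; have [BBdB _ _ BdB_sym] := MPB.
have PPdV : P *m Pd *m (P - B) = P - B.
  by rewrite mulmxBr PPdP (mulmx_pinv_range BP PPdP).
have PBdB : P *m (Bd *m B) = P by rewrite mulmxA (mulmx_pinv_null PB BBdB).
apply: (subinvariant_eq0 (Pi := Bd *m B) V0 BdP0).
  by rewrite -mulmxA (mulmxA P) PPdV mulmxBr.
by rewrite mulmxA (MP_inverse_sym_fix MPP BdB_sym PBdB).
Qed.

Theorem theorem3p2 (m n : nat) (A P1 Q1 S1 P2 Q2 S2 : 'M[R]_(m, n))
    (P1d P2d : 'M[R]_(n, m)) (Ahd : 'M[R]_(n, m)) :
  double_proper_weak_splitting A P1 Q1 S1 P1d ->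
  double_proper_weak_splitting A P2 Q2 S2 P2d ->
  is_MP_inverse ((1%:M - S2 *m P1d) *m A) Ahd ->
  mx_nonneg (Ahd *m P2) ->
  null_sub P2 S2 ->   (* N(P2) ⊆ N(S2) *)
  range_sub S2 P2 ->
  ~ spectrum (S2 *m P1d) 1 ->
  spectral_radius_lt1
    (block_mx (P2d *m Q2 - P2d *m S2 *m P1d *m Q1) (P2d *m S2 *m P1d *m S1)
              (1%:M : 'M[R]_n) (0 : 'M[R]_n)).
Proof.
move=> [[A1 _ [P1A _]] [P1P1dP1 _ _ _] P1dQ1_ge0 P1dS1_le0]
       [[A2 [_ AP2] [_ AP2null]] MP2 P2dQ2_ge0 P2dS2_le0] MPAh AhdP2_ge0 P2S2 S2P2 S2P1d1.
have S2P1dP1 : S2 *m P1d *m P1 = S2.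
  by apply: mulmx_pinv_null P1P1dP1 => x /P1A /AP2null /P2S2.
have T_ge0 : mx_nonneg (P2d *m Q2 - P2d *m S2 *m P1d *m Q1).
  apply/mx_nonneg_subr => i j; apply: (le_trans _ (P2dQ2_ge0 i j)).
  by rewrite -mulmxA; apply: mulmx_le0_ge0.
have U_ge0 : mx_nonneg (P2d *m S2 *m P1d *m S1).
  by rewrite -mulmxA; apply: mulmx_le0.
have TU : P2d *m Q2 - P2d *m S2 *m P1d *m Q1 + P2d *m S2 *m P1d *m S1
          = P2d *m (P2 - (1%:M - S2 *m P1d) *m A).
  by rewrite -(double_splitting_deflated A1 A2 S2P1dP1) mulmxDr mulmxBr !mulmxA.
apply: spectral_radius_lt1_block => // y; rewrite TU.
apply: pinv_comparison_subinvariant_eq0 MP2 MPAh _ _ AhdP2_ge0 _.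
- exact: range_sub_deflated.
- exact: null_sub_deflated.
- by rewrite -TU => i j; rewrite mxE addr_ge0.
Qed.
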